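(* Let $c,d\in\mathbb{N}$, $I=\mathbb{N}^d\times[c]$, $I_n=[n]^d\times[c]$, let $L\subseteq\mathbb{Z}^{(I)}$ be a lattice and $L_n=L\cap\mathbb{Z}^{(I_n)}$ for $n\ge1$. (i) If for every $n\ge1$, $\mathcal{B}_n\subseteq L_n$ is a generating set (respectively Markov basis, universal Gröbner basis, Graver basis) of $L_n$, then $\mathcal{B}=\bigcup_{n\ge1}\mathcal{B}_n$ is a generating set (respectively Markov basis, universal Gröbner basis, Graver basis) of $L$. Also, if $\prec$ is a term order on $\mathbb{Z}_{\ge0}^{(I)}$ and each $\mathcal{B}_n$ is a Gröbner basis of $L_n$ with respect to the restriction of $\prec$ to $\mathbb{Z}_{\ge0}^{(I_n)}$, then $\mathcal{B}$ is a Gröbner basis of $L$ with respect to $\prec$. (ii) If $\mathcal{G}$ is the Graver basis of $L$, then $\mathcal{G}\cap\mathbb{Z}^{(I_n)}$ is the Graver basis of $L_n$ for all $n\ge1$.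
   Context: $\mathbb{N}=\{1,2,\dots\}$. For a set $J$, $\mathbb{Z}^{(J)}$ is the free abelian group with basis $J$, $\mathbb{Z}_{\ge0}^{(J)}$ its nonnegative vectors; $\mathbb{Z}^{(I_n)}\subseteq\mathbb{Z}^{(I)}$ by extension by zero; a lattice is a subgroup. $\mathbf{u}\sqsubseteq\mathbf{v}$ iff $u_jv_j\ge0$ and $|u_j|\le|v_j|$ for all $j$. A term order is an additive well-ordering of $\mathbb{Z}_{\ge0}^{(J)}$. For a lattice $L\subseteq\mathbb{Z}^{(J)}$ and $\mathbf{u}\in\mathbb{Z}_{\ge0}^{(J)}$, $F_L(\mathbf{u})=\{\mathbf{v}\in\mathbb{Z}_{\ge0}^{(J)}\mid\mathbf{u}-\mathbf{v}\in L\}$. For $\mathcal{B}\subseteq L$: generating set = generates $L$ as a group; Markov basis = for every $\mathbf{u}$ the graph on $F_L(\mathbf{u})$ with edges $\{\mathbf{v},\mathbf{w}\}$ for $\mathbf{v}-\mathbf{w}\in\pm\mathcal{B}$ is connected; Gröbner basis w.r.t. $\prec$ = for every $\mathbf{u}$ there is a directed path from $\mathbf{u}$ to the $\prec$-minimal element of $F_L(\mathbf{u})$ in the graph on $F_L(\mathbf{u})$ with an edge from $\mathbf{v}$ to $\mathbf{w}$ whenever $\mathbf{v}-\mathbf{w}\in\pm\mathcal{B}$ and $\mathbf{w}\prec\mathbf{v}$; universal Gröbner basis = Gröbner basis w.r.t. every term order. The Graver basis is the set of $\sqsubseteq$-minimal elements of $L\setminus\{\mathbf{0}\}$. *)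

From mathcomp Require Import all_boot all_order all_algebra.
From Stdlib Require Import Relations.Relation_Operators.
Set Implicit Arguments. Unset Strict Implicit. Unset Printing Implicit Defensive.
Import Order.TTheory GRing.Theory Num.Theory.
Local Open Scope ring_scope.

(* Ambient index type: (nat^d) x [c]; the actual index set
   I = N^d x [c] (N = {1,2,...}) is the predicate [Itop] below, and
   I_n = [n]^d x [c] is the predicate [In n]. [c] is represented by 'I_c. *)
Definition idx (d c : nat) := (d.-tuple nat * 'I_c)%type.

Definition Itop {d c : nat} (i : idx d c) : bool :=
  all (fun x => (0 < x)%N) (tval i.1).
Definition In {d c : nat} (n : nat) (i : idx d c) : bool :=
  all (fun x => (0 < x <= n)%N) (tval i.1).

Definition vec d c := idx d c -> int.
Definition vzero {d c} : vec d c := fun _ => 0.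
Definition vsub {d c} (u v : vec d c) : vec d c := fun j => u j - v j.
Definition vadd {d c} (u v : vec d c) : vec d c := fun j => u j + v j.
Definition nonzero {d c} (v : vec d c) : Prop := exists j, v j != 0.

Definition inZJ {d c} (J : pred (idx d c)) (v : vec d c) : Prop :=
  (exists s : seq (idx d c), forall j, v j != 0 -> j \in s) /\
  (forall j, v j != 0 -> J j).

Definition nonnegJ {d c} (J : pred (idx d c)) (v : vec d c) : Prop :=
  inZJ J v /\ forall j, 0 <= v j.

Definition is_lattice {d c} (J : pred (idx d c)) (L : vec d c -> Prop) : Prop :=
  L vzero /\ (forall u v, L u -> L v -> L (vsub u v)) /\ (forall v, L v -> inZJ J v).

Definition Lcap {d c} (L : vec d c -> Prop) (n : nat) : vec d c -> Prop :=
  fun v => L v /\ inZJ (In n) v.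

Inductive zspan {d c} (B : vec d c -> Prop) : vec d c -> Prop :=
| zspan0 : zspan B vzero
| zspan_add v b : zspan B v -> B b -> zspan B (vadd v b)
| zspan_sub v b : zspan B v -> B b -> zspan B (vsub v b).

Definition generating_set {d c} (L B : vec d c -> Prop) : Prop :=
  (forall b, B b -> L b) /\ (forall v, L v -> zspan B v).

Definition fiber {d c} (J : pred (idx d c)) (L : vec d c -> Prop) (u : vec d c)
  : vec d c -> Prop := fun v => nonnegJ J v /\ L (vsub u v).

Definition pmB {d c} (B : vec d c -> Prop) (v w : vec d c) : Prop :=
  B (vsub v w) \/ B (vsub w v).

Definition markov_basis {d c} (J : pred (idx d c)) (L B : vec d c -> Prop) : Prop :=
  (forall b, B b -> L b) /\
  forall u, nonnegJ J u -> forall v w, fiber J L u v -> fiber J L u w ->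
    clos_refl_trans (vec d c)
      (fun x y => fiber J L u x /\ fiber J L u y /\ pmB B x y) v w.

Definition term_order {d c} (J : pred (idx d c)) (prec : vec d c -> vec d c -> Prop)
  : Prop :=
  (forall u, nonnegJ J u -> ~ prec u u) /\
  (forall u v w, nonnegJ J u -> nonnegJ J v -> nonnegJ J w ->
     prec u v -> prec v w -> prec u w) /\
  (forall u v, nonnegJ J u -> nonnegJ J v -> prec u v \/ u = v \/ prec v u) /\
  well_founded (fun u v => nonnegJ J u /\ nonnegJ J v /\ prec u v) /\
  (forall u v w, nonnegJ J u -> nonnegJ J v -> nonnegJ J w ->
     prec u v -> prec (vadd u w) (vadd v w)).

Definition groebner_basis {d c} (J : pred (idx d c)) (L : vec d c -> Prop)
  (prec : vec d c -> vec d c -> Prop) (B : vec d c -> Prop) : Prop :=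
  (forall b, B b -> L b) /\
  forall u, nonnegJ J u -> forall m, fiber J L u m ->
    (forall v, fiber J L u v -> ~ prec v m) ->
    clos_refl_trans (vec d c)
      (fun x y => fiber J L u x /\ fiber J L u y /\ pmB B x y /\ prec y x) u m.

Definition universal_groebner_basis {d c} (J : pred (idx d c))
  (L B : vec d c -> Prop) : Prop :=
  (forall b, B b -> L b) /\
  forall prec, term_order J prec -> groebner_basis J L prec B.

Definition conf {d c} (u v : vec d c) : Prop :=
  forall j, 0 <= u j * v j /\ `|u j| <= `|v j|.

Definition graver_basis {d c} (L G : vec d c -> Prop) : Prop :=
  forall v, G v <-> (L v /\ nonzero v /\
                     forall u, L u -> nonzero u -> conf u v -> u = v).

Definition bigunion {d c} (Bs : nat -> vec d c -> Prop) : vec d c -> Prop :=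
  fun v => exists n, (0 < n)%N /\ Bs n v.

From mathcomp Require Import all_boot all_order all_algebra.
From Stdlib Require Import Relations.Relation_Operators Wellfounded.Inclusion.
Import Order.TTheory GRing.Theory Num.Theory.
Set Implicit Arguments. Unset Strict Implicit. Unset Printing Implicit Defensive.
Local Open Scope ring_scope.

(* Everything is local.  A finitely supported vector of Z^(I) lies in Z^(I_n)
   for all large n, so finitely many vectors of L lie in a common L_n.
   Fibers restrict well: for u in Z^(I_n), F_{L_n}(u) is F_L(u) cut down to
   Z^(I_n).  Hence a Z-combination, a Markov path or a Groebner reduction path
   found in L_n is one in L; a Groebner-minimal element of F_L(u) stays
   minimal in F_{L_n}(u); and since u ⊑ v forces supp u ⊆ supp v,
   ⊑-minimality of a vector of L_n is the same in L_n and in L. *)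

Lemma clos_refl_trans_mono (A : Type) (R S : A -> A -> Prop) x y :
  (forall a b, R a b -> S a b) ->
  clos_refl_trans A R x y -> clos_refl_trans A S x y.
Proof.
move=> sRS; elim=> [a b /sRS|a|a b e _ IHab _ IHbe].
- exact: rt_step.
- exact: rt_refl.
- exact: rt_trans IHab IHbe.
Qed.

Section Supports.
Variables d c : nat.
Implicit Types (u v w : vec d c) (J K : pred (idx d c)).

Lemma inZJ_sub J u v : inZJ J u -> inZJ J v -> inZJ J (vsub u v).
Proof.
move=> [[s su] Ju] [[t tv] Jv].
have nz_uv j : u j - v j != 0 -> (u j != 0) || (v j != 0).
  by case: (eqVneq (u j) 0) => [->|//]; rewrite sub0r oppr_eq0.
split; first by exists (s ++ t) => j /nz_uv /orP[/su|/tv];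
  rewrite mem_cat => ->; rewrite ?orbT.
by move=> j /nz_uv /orP[/Ju|/Jv].
Qed.

Lemma inZJ_subset J K v : {subset J <= K} -> inZJ J v -> inZJ K v.
Proof. by move=> sJK [fin_v Jv]; split=> // j /Jv /sJK. Qed.

Lemma conf_inZJ J u v : conf u v -> inZJ J v -> inZJ J u.
Proof.
move=> uv [[s sv] Jv].
have nz_v j : u j != 0 -> v j != 0.
  by apply: contraNN => /eqP v0; have [_] := uv j; rewrite v0 normr0 normr_le0.
by split; [exists s => j /nz_v /sv | move=> j /nz_v /Jv].
Qed.

Lemma In_Itop n : {subset In n <= @Itop d c}.
Proof. by move=> j /allP In_j; apply/allP => x /In_j /andP[]. Qed.

Lemma In_le m n : (m <= n)%N -> {subset In m <= @In d c n}.
Proof.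
move=> le_mn j /allP In_j; apply/allP => x /In_j /andP[-> le_xm] /=.
exact: leq_trans le_xm le_mn.
Qed.

Lemma inZJ_Itop_In v : inZJ Itop v -> exists2 n, (0 < n)%N & inZJ (In n) v.
Proof.
move=> [[s sv] Iv].
pose Nj (j : idx d c) := \max_(x <- tval j.1) x.
pose N := \max_(j <- s) Nj j.
exists N.+1 => //; split; first by exists s.
move=> j nz_j; apply/allP => x x_j; rewrite (allP (Iv j nz_j)) //=.
apply/leqW/(leq_trans (@leq_bigmax_seq _ _ xpredT id _ x_j isT)).
exact: (@leq_bigmax_seq _ _ xpredT Nj _ (sv j nz_j)).
Qed.

Lemma inZJ_Itop_In2 v w : inZJ Itop v -> inZJ Itop w ->
  exists2 n, (0 < n)%N & inZJ (In n) v /\ inZJ (In n) w.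
Proof.
move=> /inZJ_Itop_In[m m_gt0 vm] /inZJ_Itop_In[n _ wn].
have [le_m le_n] := (In_le (leq_maxl m n), In_le (leq_maxr m n)).
exists (maxn m n); first by rewrite leq_max m_gt0.
by split; [apply: inZJ_subset vm | apply: inZJ_subset wn].
Qed.

Lemma inZJ_Itop_In3 u v w : inZJ Itop u -> inZJ Itop v -> inZJ Itop w ->
  exists2 n, (0 < n)%N & [/\ inZJ (In n) u, inZJ (In n) v & inZJ (In n) w].
Proof.
move=> Iu /(inZJ_Itop_In2 Iu)[m m_gt0 [um vm]] /inZJ_Itop_In[n _ wn].
have [le_m le_n] := (In_le (leq_maxl m n), In_le (leq_maxr m n)).
exists (maxn m n); first by rewrite leq_max m_gt0.
by split; [apply: inZJ_subset um | apply: inZJ_subset vm | apply: inZJ_subset wn].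
Qed.

Lemma nonnegJ_In_Itop n v : nonnegJ (In n) v -> nonnegJ Itop v.
Proof. by move=> [vn v_ge0]; split=> //; apply: inZJ_subset (@In_Itop n) vn. Qed.

Lemma term_order_In n (prec : vec d c -> vec d c -> Prop) :
  term_order Itop prec -> term_order (In n) prec.
Proof.
have I := @nonnegJ_In_Itop n.
move=> [irr [trans [total [wf add]]]].
split; first by move=> u /I; apply: irr.
split; first by move=> u v w /I ? /I ? /I ?; apply: trans.
split; first by move=> u v /I ? /I ?; apply: total.
split; last by move=> u v w /I ? /I ? /I ?; apply: add.
by apply: wf_incl wf => u v [/I ? [/I ? uv]].
Qed.

End Supports.

Section Restriction.
Variables d c : nat.
Variable L : vec d c -> Prop.
Implicit Types (u v : vec d c) (Bs : nat -> vec d c -> Prop).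

Lemma fiber_Lcap n u v : fiber (In n) (Lcap L n) u v -> fiber Itop L u v.
Proof. by move=> [vn [Luv _]]; split=> //; apply: nonnegJ_In_Itop vn. Qed.

Lemma fiber_Lcap_restrict n u v : inZJ (In n) u -> inZJ (In n) v ->
  fiber Itop L u v -> fiber (In n) (Lcap L n) u v.
Proof. by move=> un vn [[_ v_ge0] Luv]; do 2!split=> //; apply: inZJ_sub. Qed.

Lemma pmB_bigunion Bs n x y : (0 < n)%N -> pmB (Bs n) x y -> pmB (bigunion Bs) x y.
Proof. by move=> n_gt0 [Bxy|Byx]; [left|right]; exists n. Qed.

Lemma bigunion_sub_lattice Bs :
  (forall n, (0 < n)%N -> forall b, Bs n b -> Lcap L n b) ->
  forall b, bigunion Bs b -> L b.
Proof. by move=> sBL b [n [n_gt0 /(sBL n n_gt0)[]]]. Qed.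

Lemma markov_basis_bigunion Bs :
  (forall n, (0 < n)%N -> markov_basis (In n) (Lcap L n) (Bs n)) ->
  markov_basis Itop L (bigunion Bs).
Proof.
move=> markovB; split; first by apply: bigunion_sub_lattice => n /markovB[].
move=> u u_ge0 v w Fv Fw.
have [n n_gt0 [un vn wn]] := inZJ_Itop_In3 u_ge0.1 Fv.1.1 Fw.1.1.
have /(markovB n n_gt0).2 path_vw : nonnegJ (In n) u by split; last exact: u_ge0.2.
apply: clos_refl_trans_mono
  (path_vw v w (fiber_Lcap_restrict un vn Fv) (fiber_Lcap_restrict un wn Fw)).
by move=> x y [/fiber_Lcap Fx [/fiber_Lcap Fy /(pmB_bigunion n_gt0) Bxy]].
Qed.

Lemma groebner_basis_bigunion prec Bs :
  (forall n, (0 < n)%N -> groebner_basis (In n) (Lcap L n) prec (Bs n)) ->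
  groebner_basis Itop L prec (bigunion Bs).
Proof.
move=> groebB; split; first by apply: bigunion_sub_lattice => n /groebB[].
move=> u u_ge0 m Fm m_min.
have [n n_gt0 [un mn]] := inZJ_Itop_In2 u_ge0.1 Fm.1.1.
have m_min_n v : fiber (In n) (Lcap L n) u v -> ~ prec v m.
  by move=> /fiber_Lcap; apply: m_min.
have /(groebB n n_gt0).2 path_um : nonnegJ (In n) u by split; last exact: u_ge0.2.
apply: clos_refl_trans_mono (path_um m (fiber_Lcap_restrict un mn Fm) m_min_n).
by move=> x y [/fiber_Lcap Fx [/fiber_Lcap Fy [/(pmB_bigunion n_gt0) Bxy xy]]].
Qed.

Lemma universal_groebner_basis_bigunion Bs :
  (forall n, (0 < n)%N -> universal_groebner_basis (In n) (Lcap L n) (Bs n)) ->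
  universal_groebner_basis Itop L (bigunion Bs).
Proof.
move=> ugbB; split; first by apply: bigunion_sub_lattice => n /ugbB[].
move=> prec prec_ord; apply: groebner_basis_bigunion => n n_gt0.
exact: (ugbB n n_gt0).2 _ (term_order_In n prec_ord).
Qed.

Lemma graver_basis_Lcap G n : graver_basis L G ->
  graver_basis (Lcap L n) (fun v => G v /\ inZJ (In n) v).
Proof.
move=> graverG v; split.
- move=> [/graverG[Lv [nz_v v_min]] vn]; do 2!split=> //.
  by move=> u [Lu _]; apply: v_min.
- move=> [[Lv vn] [nz_v v_min]]; split=> //; apply/graverG; do 2!split=> //.
  by move=> u Lu nz_u uv; apply: v_min => //; split; last exact: conf_inZJ uv vn.
Qed.

Hypothesis L_supp : forall v, L v -> inZJ Itop v.

Lemma generating_set_bigunion Bs :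
  (forall n, (0 < n)%N -> generating_set (Lcap L n) (Bs n)) ->
  generating_set L (bigunion Bs).
Proof.
move=> genB; split; first by apply: bigunion_sub_lattice => n /genB[].
move=> v Lv; have [n n_gt0 vn] := inZJ_Itop_In (L_supp Lv).
have /(genB n n_gt0).2 : Lcap L n v by split.
elim=> [|w b _ IHw Bb|w b _ IHw Bb]; first exact: zspan0.
- by apply: zspan_add IHw _; exists n.
- by apply: zspan_sub IHw _; exists n.
Qed.

Lemma graver_basis_bigunion Bs :
  (forall n, (0 < n)%N -> graver_basis (Lcap L n) (Bs n)) ->
  graver_basis L (bigunion Bs).
Proof.
move=> graverB v; split.
- move=> [n [n_gt0 /(graverB n n_gt0)[[Lv vn] [nz_v v_min]]]]; do 2!split=> //.
  by move=> u Lu nz_u uv; apply: v_min => //; split; last exact: conf_inZJ uv vn.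
- move=> [Lv [nz_v v_min]]; have [n n_gt0 vn] := inZJ_Itop_In (L_supp Lv).
  exists n; split=> //; apply/(graverB n n_gt0); do 2!split=> //.
  by move=> u [Lu _]; apply: v_min.
Qed.

End Restriction.

Theorem proposition2p7 (d c : nat) (hd : (0 < d)%N) (hc : (0 < c)%N)
  (L : vec d c -> Prop) (hL : is_lattice Itop L) :
  (* (i) generating sets *)
  (forall Bs : nat -> vec d c -> Prop,
     (forall n, (0 < n)%N -> generating_set (Lcap L n) (Bs n)) ->
     generating_set L (bigunion Bs)) /\
  (* (i) Markov bases *)
  (forall Bs : nat -> vec d c -> Prop,
     (forall n, (0 < n)%N -> markov_basis (In n) (Lcap L n) (Bs n)) ->
     markov_basis Itop L (bigunion Bs)) /\
  (* (i) universal Groebner bases *)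
  (forall Bs : nat -> vec d c -> Prop,
     (forall n, (0 < n)%N -> universal_groebner_basis (In n) (Lcap L n) (Bs n)) ->
     universal_groebner_basis Itop L (bigunion Bs)) /\
  (* (i) Graver bases *)
  (forall Bs : nat -> vec d c -> Prop,
     (forall n, (0 < n)%N -> graver_basis (Lcap L n) (Bs n)) ->
     graver_basis L (bigunion Bs)) /\
  (* (i) Groebner bases w.r.t. a fixed term order and its restrictions *)
  (forall prec : vec d c -> vec d c -> Prop, term_order Itop prec ->
   forall Bs : nat -> vec d c -> Prop,
     (forall n, (0 < n)%N -> groebner_basis (In n) (Lcap L n) prec (Bs n)) ->
     groebner_basis Itop L prec (bigunion Bs)) /\
  (* (ii) *)
  (forall G : vec d c -> Prop, graver_basis L G ->
   forall n, (0 < n)%N ->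
     graver_basis (Lcap L n) (fun v => G v /\ inZJ (In n) v)).
Proof.
have [_ [_ L_supp]] := hL.
split; first exact: generating_set_bigunion.
split; first exact: markov_basis_bigunion.
split; first exact: universal_groebner_basis_bigunion.
split; first exact: graver_basis_bigunion.
split; first by move=> prec _; apply: groebner_basis_bigunion.
by move=> G graverG n _; apply: graver_basis_Lcap.
Qed.
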